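(* Let $\phi:[0,\infty)\to\mathbb{R}$ be such that $x\mapsto\phi(\|x\|)$ is $C^\infty$ on $\mathbb{R}^d$, $\phi(0)>0$, $\phi(u)\to0$ as $u\to\infty$, and $\phi,\phi',\phi''$ are integrable on $[0,\infty)$. Fix $\eta_d,\eta_g>0$. Then there is $\lambda_0>0$ such that for every $\lambda\in(0,\lambda_0)$ there exists $v_0>0$ with $$v_0=-\eta_g\eta_d\sum_{j=0}^\infty\rho^j\phi'(jv_0),\qquad\rho=1-\eta_d\lambda.$$ *)

From HB Require Import structures.
From mathcomp Require Import all_boot all_order all_algebra.
From mathcomp Require Import all_classical all_reals all_analysis.
Set Implicit Arguments. Unset Strict Implicit. Unset Printing Implicit Defensive.
Import Order.TTheory GRing.Theory Num.Theory.
Import numFieldNormedType.Exports.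
Local Open Scope classical_set_scope.
Local Open Scope ring_scope.

Section Defs.
Variable R : realType.

Definition enorm (d : nat) (x : 'rV[R]_d) : R :=
  Num.sqrt (\sum_(i < d) x ord0 i ^+ 2).

Definition ebasis (d : nat) (i : 'I_d) : 'rV[R]_d := delta_mx ord0 i.

Fixpoint iter_partial (d : nat) (s : seq 'I_d) (f : 'rV[R]_d -> R) : 'rV[R]_d -> R :=
  match s with
  | [::] => f
  | i :: s' => fun x => derive (iter_partial s' f) x (ebasis i)
  end.

Definition smooth_Rd (d : nat) (f : 'rV[R]_d -> R) : Prop :=
  forall s : seq 'I_d,
    continuous (iter_partial s f) /\
    (forall (i : 'I_d) (x : 'rV[R]_d), derivable (iter_partial s f) x (ebasis i)).

Definition is_deriv_Ici (f df : R -> R) : Prop :=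
  (forall u : R, 0 < u -> is_derive u (1 : R) f (df u)) /\
  ((fun h : R => (f h - f 0) / h) @ 0^'+ --> df 0).

End Defs.

From HB Require Import structures.
From mathcomp Require Import all_boot all_order all_algebra.
From mathcomp Require Import all_classical all_reals all_analysis.
From mathcomp Require Import ring lra.
Import Order.TTheory GRing.Theory Num.Theory.
Import numFieldNormedType.Exports.
Local Open Scope classical_set_scope.
Local Open Scope ring_scope.

Set Implicit Arguments. Unset Strict Implicit. Unset Printing Implicit Defensive.

(* Let [psi = phi'], [c = eta_g * eta_d] and [F v = sum_j rho^j psi (j v)]; we look for a
   zero of [v + c F v].  For a step [a > 0], [a F a] is a Riemann sum of [psi]; summing by parts
   against the weights [rho^j] bounds it by [a psi 0 - phi a] plus the geometric average
   [(1 - rho) sum_k rho^k phi ((k+1) a)] plus error terms controlled by the total variation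
   [\int |phi''|] of [psi].  Taking [a] small (so that [phi a >= phi 0 / 2]) and then [lambda]
   small makes [a + c F a < 0].  As [|F| <= B / (1 - rho)] on [[a, +oo[], [v + c F v] is
   positive far out, and the intermediate value theorem gives [v0].  Smoothness of
   [x |-> phi |x|] is used only for the continuity of [phi''] on [(0, +oo)], which the
   fundamental theorem of calculus needs. *)

Section RadialDerivatives.
Variable R : realType.

Lemma enorm_scale_ebasis d (i : 'I_d) (s : R) : enorm (s *: ebasis R i) = `|s|.
Proof.
rewrite /enorm /ebasis (bigD1 i) //= big1 ?addr0.
  by rewrite !mxE !eqxx /= mulr1 sqrtr_sqr.
by move=> j /negbTE ji; rewrite !mxE ji andbF mulr0 expr0n.
Qed.

Lemma derive_radial d (i : 'I_d) (G : 'rV[R]_d -> R) (H : R -> R) (t l : R) :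
  (forall s, 0 < s -> G (s *: ebasis R i) = H s) -> 0 < t ->
  is_derive t 1 H l -> derive G (t *: ebasis R i) (ebasis R i) = l.
Proof.
move=> GH t0 [dH <-]; apply: cvg_lim => //.
have : (fun h : R => h^-1 *: ((H \o shift t) (h *: 1) - H t)) @ 0^' --> derive H t 1
  := dH.
apply: cvg_trans; apply: near_eq_cvg.
have : \forall h \near (0 : R)^', - t < h.
  by apply: cvg_within; apply: (@cvgr_gt _ _ _ _ id 0 cvg_id); rewrite oppr_lt0.
apply: filterS => h ht /=.
rewrite -scalerDl GH ?GH //; last by rewrite -ltrBlDr sub0r.
by rewrite /= scaler1 addrC.
Qed.

Lemma radial_second_derivative_continuous d (hd : (0 < d)%N) (phi dphi ddphi : R -> R) :
  smooth_Rd (fun x : 'rV[R]_d => phi (enorm x)) ->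
  (forall u : R, 0 < u -> is_derive u 1 phi (dphi u)) ->
  (forall u : R, 0 < u -> is_derive u 1 dphi (ddphi u)) ->
  forall t : R, 0 < t -> {for t, continuous ddphi}.
Proof.
move=> hs dphiE ddphiE t t0.
pose i := Ordinal hd.
pose f := fun x : 'rV[R]_d => phi (enorm x).
have f_axis s : 0 < s -> f (s *: ebasis R i) = phi s.
  by move=> s0; rewrite /f enorm_scale_ebasis gtr0_norm.
have df_axis s : 0 < s -> iter_partial [:: i] f (s *: ebasis R i) = dphi s.
  by move=> s0; apply: derive_radial f_axis s0 (dphiE s s0).
have ddf_axis s : 0 < s -> iter_partial [:: i; i] f (s *: ebasis R i) = ddphi s.
  by move=> s0; rewrite [LHS]/=; apply: derive_radial df_axis s0 (ddphiE s s0).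
have ddf_cont : {for t, continuous (iter_partial [:: i; i] f \o (fun s : R => s *: ebasis R i))}.
  by apply: continuous_comp; [exact: scalel_continuous | exact: (hs [:: i; i]).1].
rewrite /prop_for /continuous_at -(ddf_axis t t0).
apply: cvg_trans ddf_cont; apply: near_eq_cvg.
near=> s; have := ddf_axis s; rewrite /= => -> //.
near: s; exact: (@cvgr_gt _ _ _ _ id t cvg_id).
Unshelve. all: by end_near. Qed.

End RadialDerivatives.

Section Variation.
Variable R : realType.
Notation mu := (@lebesgue_measure R).

Lemma MVT_segment_pos (f df : R -> R) (s u : R) : 0 < s -> s <= u ->
  (forall t : R, 0 < t -> is_derive t 1 f (df t)) ->
  exists2 c, c \in `[s, u] & f u - f s = df c * (u - s).
Proof.
move=> s0 su fdf; apply: MVT_segment => //.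
  by move=> x; rewrite in_itv /= => /andP[sx _]; apply: fdf; exact: lt_trans sx.
apply: derivable_within_continuous => x; rewrite in_itv /= => /andP[sx _].
by have [] := fdf x (lt_le_trans s0 sx).
Qed.

Lemma ger0_is_derive_le (f df : R -> R) (s u : R) : 0 < s -> s <= u ->
  (forall t : R, 0 < t -> is_derive t 1 f (df t)) ->
  (forall t : R, 0 < t -> 0 <= df t) -> f s <= f u.
Proof.
move=> s0 su fdf df_ge0; have [c cin fE] := MVT_segment_pos s0 su fdf.
rewrite -subr_ge0 fE mulr_ge0 ?subr_ge0 // df_ge0 //.
by move: cin; rewrite in_itv /= => /andP[sc _]; exact: lt_le_trans sc.
Qed.

Lemma bounded_primitive_norm (g : R -> R) :
  (forall t : R, 0 < t -> {for t, continuous g}) ->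
  mu.-integrable `[0, +oo[ (EFin \o g) ->
  exists W : R -> R, exists K : R,
    (forall t : R, 0 < t -> is_derive t 1 W `|g t|) /\ (forall t : R, 0 <= W t <= K).
Proof.
move=> gc gint.
have normg_int : mu.-integrable `[0, +oo[ (EFin \o (Num.norm \o g)) :=
  integrable_norm gint.
have sub_itv (t : R) : `[0, t] `<=` `[0, +oo[ by apply: subset_itvl; rewrite bnd_simp.
pose W t := \int[mu]_(x in `[0, t]) `|g x|.
exists W, (\int[mu]_(x in `[0, +oo[) `|g x|); split.
  move=> t t0.
  have [dW W'] : derivable W t 1 /\ derive1 W t = `|g t|.
    apply: (@continuous_FTC1_closed R (Num.norm \o g) 0 t (t + 1)) => //.
    - by rewrite ltrDl.
    - by apply: integrableS normg_int => //; exact: sub_itv.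
    - by apply: continuous_comp; [exact: gc | exact: norm_continuous].
  by apply: DeriveDef => //; rewrite -derive1E.
move=> t; apply/andP; split.
  by apply: Rintegral_ge0 => x _; exact: normr_ge0.
rewrite /W /Rintegral; apply: fine_le.
- by apply: integrable_fin_num => //; apply: integrableS normg_int => //; exact: sub_itv.
- exact: integrable_fin_num.
- by apply: ge0_subset_integral => //; case/integrableP: normg_int.
Qed.

Lemma is_derive_dist_le (psi g W : R -> R) :
  (forall t : R, 0 < t -> is_derive t 1 psi (g t)) ->
  (forall t : R, 0 < t -> is_derive t 1 W `|g t|) ->
  forall s u : R, 0 < s -> s <= u -> `|psi u - psi s| <= W u - W s.
Proof.
move=> psig Wg s u s0 su.
have W_sub_psi : W s - psi s <= W u - psi u.
  apply: (@ger0_is_derive_le (W - psi) (fun t => `|g t| - g t)) => // t t0.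
    by apply: is_deriveB; [exact: Wg | exact: psig].
  by rewrite subr_ge0 ler_norm.
have W_add_psi : W s + psi s <= W u + psi u.
  apply: (@ger0_is_derive_le (W + psi) (fun t => `|g t| + g t)) => // t t0.
    by apply: is_deriveD; [exact: Wg | exact: psig].
  by have := ler_norm (- g t); rewrite normrN; lra.
by rewrite ler_norml; apply/andP; split; lra.
Qed.

Lemma taylor1_dist_le (phi psi W : R -> R) :
  (forall t : R, 0 < t -> is_derive t 1 phi (psi t)) ->
  (forall s u : R, 0 < s -> s <= u -> `|psi u - psi s| <= W u - W s) ->
  forall s a : R, 0 < s -> 0 < a ->
  `|phi (s + a) - phi s - a * psi s| <= a * (W (s + a) - W s).
Proof.
move=> phipsi psiW s a s0 a0.
have sa : s <= s + a by rewrite lerDl ltW.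
have [c /andP[sc cs] ->] := MVT_segment_pos s0 sa phipsi.
have := psiW s c s0 sc.
have := psiW c (s + a) (lt_le_trans s0 sc) cs.
have := normr_ge0 (psi (s + a) - psi c).
have -> : psi c * (s + a - s) - a * psi s = a * (psi c - psi s) by ring.
rewrite normrM (gtr0_norm a0) ler_pM2l //; lra.
Qed.

Lemma variation_bounded (psi W : R -> R) (a K : R) : 0 < a ->
  (forall s u : R, 0 < s -> s <= u -> `|psi u - psi s| <= W u - W s) ->
  (forall t : R, 0 <= W t <= K) ->
  forall s, a <= s -> `|psi s| <= `|psi a| + K.
Proof.
move=> a0 psiW Wb s as_; have := psiW a s a0 as_.
have := ler_normD (psi a) (psi s - psi a); rewrite addrC subrK.
have /andP[+ _] := Wb a; have /andP[_ +] := Wb s; lra.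
Qed.

End Variation.

Section GeometricallyWeightedSeries.
Variable R : realType.

Lemma geometric_tail_le (u : R^nat) (B r : R) : 0 <= r -> r < 1 ->
  (forall j, `|u j| <= B * r ^+ j) ->
  cvgn (series u) /\
  forall N, (1 - r) * `|limn (series u) - series u N| <= B * r ^+ N.
Proof.
move=> r0 r1 uB.
have B0 : 0 <= B by have := uB 0%N; rewrite expr0 mulr1; apply: le_trans.
have r1' : 0 <= 1 - r by rewrite subr_ge0 ltW.
have su_cvg : cvgn (series u).
  apply: normed_cvg; apply: (@series_le_cvg _ _ (geometric B r)) => //.
  - by move=> n; exact: normr_ge0.
  - by move=> n; exact: geometric_ge0.
  - by apply: is_cvg_geometric_series; rewrite ger0_norm.
split => // N.
have partial k : (1 - r) * `|series u (k + N) - series u N| <= B * (r ^+ N - r ^+ (k + N)).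
  elim: k => [|k IH]; first by rewrite add0n !subrr normr0 !mulr0.
  rewrite addSn seriesSr addrAC exprS.
  have := ler_normD (series u (k + N) - series u N) (u (k + N)).
  have := ler_wpM2l r1' (uB (k + N)%N).
  have := mulr_ge0 B0 (exprn_ge0 (k + N) r0).
  nra.
have lim_cvg : (fun n => (1 - r) * `|series u n - series u N|) @ \oo -->
    (1 - r) * `|limn (series u) - series u N|.
  apply: cvgM; first exact: cvg_cst.
  by apply: cvg_norm; apply: cvgB; [exact: su_cvg | exact: cvg_cst].
rewrite -(cvg_lim _ lim_cvg) //.
apply: limr_le; first by apply/cvg_ex; eexists; exact: lim_cvg.
near=> n.
have -> : n = ((n - N) + N)%N by rewrite subnK //; near: n; exact: nbhs_infty_ge.
apply: le_trans (partial _) _.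
have := exprn_ge0 (n - N + N) r0; nra.
Unshelve. all: by end_near. Qed.

Lemma weighted_series_tail_le (g : R^nat) (B r : R) : 0 <= r -> r < 1 ->
  (forall j, `|g j| <= B) ->
  cvgn (series (fun j => r ^+ j * g j)) /\
  forall N, (1 - r) * `|limn (series (fun j => r ^+ j * g j)) -
                       series (fun j => r ^+ j * g j) N| <= B * r ^+ N.
Proof.
move=> r0 r1 gB; apply: geometric_tail_le => // j.
by rewrite normrM ger0_norm ?exprn_ge0 // mulrC ler_wpM2r ?exprn_ge0.
Qed.

Lemma continuous_weighted_partial_sum (g : nat -> R -> R) (r : R) N :
  (forall j, continuous (g j)) ->
  continuous (fun v => series (fun j => r ^+ j * g j v) N).
Proof.
move=> gc; elim: N => [|N IH] x.
  have -> : (fun v => series (fun j => r ^+ j * g j v) 0) = cst 0.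
    by apply: funext => v; rewrite /series /= big_geq.
  exact: cvg_cst.
have -> : (fun v => series (fun j => r ^+ j * g j v) N.+1) =
    (fun v => series (fun j => r ^+ j * g j v) N + r ^+ N * g N v).
  by apply: funext => v; rewrite seriesSr.
by apply: cvgD; [exact: IH | apply: cvgM; [exact: cvg_cst | exact: gc]].
Qed.

Lemma continuous_weighted_series (g : nat -> R -> R) (B r : R) : 0 <= r -> r < 1 ->
  (forall j, continuous (g j)) -> (forall j v, `|g j v| <= B) ->
  continuous (fun v => limn (series (fun j => r ^+ j * g j v))).
Proof.
move=> r0 r1 gc gB x; apply/cvgrPdist_lt => e e0.
have tail v := (weighted_series_tail_le r0 r1 (gB ^~ v)).2.
have r1' : 0 < 1 - r by rewrite subr_gt0.
near \oo => N.
have tailN : B * r ^+ N < (1 - r) * (e / 4).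
  near: N; apply: (@cvgr_lt _ _ _ _ (geometric B r) 0); last first.
    by rewrite mulr_gt0 // divr_gt0.
  by apply: cvg_geometric; rewrite ger0_norm.
have psum_cont := continuous_weighted_partial_sum (r := r) (N := N) gc.
have /cvgrPdist_lt /(_ (e / 2)) psum_near := psum_cont x.
near=> t.
have hx := le_lt_trans (tail x N) tailN; rewrite ltr_pM2l // in hx.
have ht := le_lt_trans (tail t N) tailN; rewrite ltr_pM2l // in ht.
have hxt : `|series (fun j => r ^+ j * g j x) N - series (fun j => r ^+ j * g j t) N| < e / 2.
  by near: t; apply: psum_near; rewrite divr_gt0.
set Fx := limn _ in hx *; set Ft := limn _ in ht *.
set Px := series _ N in hx hxt *; set Pt := series _ N in ht hxt *.
have -> : Fx - Ft = (Fx - Px) + (Px - Pt) - (Ft - Pt) by ring.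
apply: le_lt_trans (ler_normB _ _) _; apply: le_lt_trans (lerD (ler_normD _ _) (lexx _)) _.
lra.
Unshelve. all: by end_near. Qed.

Lemma cvg_weighted_series_mul (psi : R -> R) (a r B v : R) :
  0 < a -> a <= v -> 0 <= r -> r < 1 ->
  `|psi 0| <= B -> (forall s, a <= s -> `|psi s| <= B) ->
  cvgn (series (fun j => r ^+ j * psi (j%:R * v))).
Proof.
move=> a0 av r0 r1 psi0B psiB.
apply: (weighted_series_tail_le (B := B) r0 r1 _).1 => -[|j] /=.
  by rewrite mul0r.
by apply: psiB; rewrite (le_trans av) // ler_peMl ?ler1n // (le_trans (ltW a0)).
Qed.

(* [m v = a + |v - a|] equals [v] on [[a, +oo[] and is at least [a] everywhere, so the
   map below is continuous on all of [R] while only sampling [psi] on [{0} \u [a, +oo[]. *)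
Lemma weighted_series_fixed_point (psi : R -> R) (a c r B : R) :
  0 < a -> 0 < c -> 0 <= r -> r < 1 ->
  (forall s, a <= s -> {for s, continuous psi}) ->
  `|psi 0| <= B -> (forall s, a <= s -> `|psi s| <= B) ->
  a + c * limn (series (fun j => r ^+ j * psi (j%:R * a))) < 0 ->
  exists v, a <= v /\ cvgn (series (fun j => r ^+ j * psi (j%:R * v))) /\
    v = - c * limn (series (fun j => r ^+ j * psi (j%:R * v))).
Proof.
move=> a0 c0 r0 r1 psic psi0B psiB Fa_neg.
pose m v := a + `|v - a|.
have am v : a <= m v by rewrite lerDl.
have mE v : a <= v -> m v = v by move=> av; rewrite /m ger0_norm ?subr_ge0 // addrC subrK.
pose g j v := psi (j%:R * m v).
have ja_le j v : a <= j.+1%:R * m v.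
  by apply: le_trans (am v) _; rewrite ler_peMl ?ler1n // (le_trans (ltW a0)).
have gB j v : `|g j v| <= B by case: j => [|j]; rewrite /g ?mul0r // psiB.
have gc j : continuous (g j).
  case: j => [|j] x.
    have -> : g 0%N = cst (psi 0) by apply: funext => v; rewrite /g mul0r.
    exact: cvg_cst.
  apply: continuous_comp; last exact: psic.
  apply: cvgM; first exact: cvg_cst.
  by apply: cvgD; [exact: cvg_cst | apply: cvg_norm; apply: cvgB; [exact: cvg_id | exact: cvg_cst]].
have gE v : a <= v -> (fun j => r ^+ j * g j v) = (fun j => r ^+ j * psi (j%:R * v)).
  by move=> av; apply: funext => j; rewrite /g mE.
pose H v := v + c * limn (series (fun j => r ^+ j * g j v)).
have Hc : continuous H.
  move=> x; apply: cvgD; first exact: cvg_id.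
  by apply: cvgM; [exact: cvg_cst | exact: (continuous_weighted_series r0 r1 gc gB)].
have B0 : 0 <= B := le_trans (normr_ge0 _) psi0B.
have r1' : 0 < 1 - r by rewrite subr_gt0.
set b := a + c * (B / (1 - r)) + 1.
have ab : a <= b by rewrite /b -addrA lerDl addr_ge0 // mulr_ge0 ?divr_ge0 // ltW.
have Ha : H a < 0 by rewrite /H gE.
have Hb : 0 < H b.
  have := (weighted_series_tail_le r0 r1 (gB ^~ b)).2 0%N.
  rewrite expr0 mulr1 /series /= big_geq // subr0 -ler_pdivlMl // mulrC ler_norml.
  move=> /andP[+ _]; rewrite -(ler_pM2l c0) mulrN /H /b; lra.
have [v /andP[av _] Hv] : exists2 v, v \in `[a, b] & H v = 0.
  apply: IVT => //; first exact: continuous_subspaceT.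
  by rewrite ge_min (ltW Ha) le_max (ltW Hb) orbT.
move: Hv; rewrite /H gE // => Hv.
exists v; split => //; split; last by lra.
exact: cvg_weighted_series_mul a0 av r0 r1 psi0B psiB.
Qed.

End GeometricallyWeightedSeries.

Section RiemannSums.
Variable R : realType.

Lemma sum_by_parts (x : nat -> R) (r : R) N :
  \sum_(0 <= j < N) r ^+ j.+1 * (x j.+1 - x j) =
  r ^+ N * x N - x 0%N + \sum_(0 <= k < N) (1 - r) * r ^+ k * x k.
Proof.
elim: N => [|N IH]; first by rewrite !big_geq // expr0 mul1r subrr addr0.
by rewrite !big_nat_recr //= IH exprS; ring.
Qed.

Lemma geometric_average_le (x : nat -> R) (r e : R) (K N : nat) : 0 <= r <= 1 ->
  (forall k, (K <= k)%N -> `|x k| <= e) ->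
  \sum_(0 <= k < N) (1 - r) * r ^+ k * x k <=
  (1 - r) * \sum_(0 <= k < minn N K) `|x k| + e * (1 - r ^+ N).
Proof.
move=> /andP[r0 r1] xe.
have r1' : 0 <= 1 - r by rewrite subr_ge0.
have e0 : 0 <= e := le_trans (normr_ge0 _) (xe K (leqnn K)).
elim: N => [|N IH].
  by rewrite big_geq // min0n big_geq // mulr0 expr0 subrr mulr0 addr0.
rewrite big_nat_recr //=.
have rN0 : 0 <= r ^+ N := exprn_ge0 N r0.
have rN1 : r ^+ N <= 1 by rewrite exprn_ile1.
have rNS : r ^+ N.+1 = r * r ^+ N by rewrite exprS.
have [NK | KN] := ltnP N K.
  rewrite (minn_idPl NK) (minn_idPl (ltnW NK)) in IH *.
  rewrite big_nat_recr //= mulrDr.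
  have : (1 - r) * r ^+ N * x N <= (1 - r) * `|x N|.
    rewrite -mulrA ler_wpM2l // (le_trans (ler_norm _)) // normrM ger0_norm //.
    by rewrite ler_piMl.
  have : e * (1 - r ^+ N) <= e * (1 - r ^+ N.+1) by rewrite ler_wpM2l // rNS; nra.
  lra.
rewrite (minn_idPr (leqW KN)) (minn_idPr KN) in IH *.
have : x N <= e := le_trans (ler_norm _) (xe N KN).
have : 0 <= (1 - r) * r ^+ N := mulr_ge0 r1' rN0.
rewrite rNS; nra.
Qed.

(* Riemann-sum comparison: [a * psi (j a)] is [phi ((j+1) a) - phi (j a)] up to the
   variation of [W] on [[j a, (j+1) a]]; summing by parts turns the increments of
   [phi] into [- phi a] plus a geometric average of the [phi ((k+1) a)]. *)
Lemma weighted_riemann_sum_le (phi psi W : R -> R) (a r e K2 : R) (K N : nat) :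
  0 < a -> 0 <= r <= 1 ->
  (forall s, 0 < s -> `|phi (s + a) - phi s - a * psi s| <= a * (W (s + a) - W s)) ->
  (forall s u, 0 < s -> s <= u -> W s <= W u) ->
  (forall t, 0 <= W t <= K2) ->
  (forall k, (K <= k)%N -> `|phi (k.+1%:R * a)| <= e) ->
  (K <= N)%N ->
  a * series (fun j => r ^+ j * psi (j%:R * a)) N.+1 <=
  a * psi 0 + 2 * e - phi a + (1 - r) * \sum_(0 <= k < K) `|phi (k.+1%:R * a)| + a * K2.
Proof.
move=> a0 /andP[r0 r1] taylor Wmono Wb xe KN.
set x := fun k : nat => phi (k.+1%:R * a).
set w := fun k : nat => W (k.+1%:R * a).
have e0 : 0 <= e := le_trans (normr_ge0 _) (xe K (leqnn K)).
have step j : a * (r ^+ j.+1 * psi (j.+1%:R * a)) <=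
    r ^+ j.+1 * (x j.+1 - x j) + a * (w j.+1 - w j).
  have ja0 : 0 < j.+1%:R * a by rewrite mulr_gt0 ?ltr0n.
  have := taylor _ ja0.
  have -> : j.+1%:R * a + a = j.+2%:R * a by rewrite [in RHS]mulrSr mulrDl mul1r.
  rewrite -/(x j.+1) -/(x j) -/(w j.+1) -/(w j) => hj.
  have : a * psi (j.+1%:R * a) <= x j.+1 - x j + a * (w j.+1 - w j).
    by have := ler_norm (- (x j.+1 - x j - a * psi (j.+1%:R * a))); rewrite normrN; lra.
  move=> /(ler_wpM2l (exprn_ge0 j.+1 r0)) hj'.
  have : w j <= w j.+1 by apply: Wmono => //; rewrite ler_wpM2r ?ler_nat // ltW.
  rewrite -subr_ge0 => /(mulr_ge0 (ltW a0)) dw_ge0.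
  have : 0 <= (1 - r ^+ j.+1) * (a * (w j.+1 - w j)).
    by rewrite mulr_ge0 // subr_ge0 exprn_ile1.
  lra.
have sum_le : a * \sum_(0 <= j < N) r ^+ j.+1 * psi (j.+1%:R * a) <=
    \sum_(0 <= j < N) r ^+ j.+1 * (x j.+1 - x j) + a * (w N - w 0%N).
  rewrite mulr_sumr -(telescope_sumr (fun k => w k)) // mulr_sumr -big_split /=.
  by apply: ler_sum => j _; exact: step.
rewrite sum_by_parts in sum_le.
have := @geometric_average_le x r e K N (introT andP (conj r0 r1)) xe.
rewrite (minn_idPr KN) => avg_le.
have rN0 : 0 <= r ^+ N := exprn_ge0 _ r0.
have : r ^+ N <= 1 by rewrite exprn_ile1.
have := le_trans (ler_norm (x N)) (xe N KN).
have : x 0%N = phi a by rewrite /x mul1r.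
have := Wb (N.+1%:R * a); have := Wb (1%:R * a); rewrite -/(w N) -/(w 0%N).
rewrite /series /= big_nat_recl // expr0 mul1r mul0r mulrDr.
nra.
Qed.

Lemma weighted_series_le (phi psi W : R -> R) (a r e K2 : R) (K : nat) :
  0 < a -> 0 <= r <= 1 ->
  (forall s, 0 < s -> `|phi (s + a) - phi s - a * psi s| <= a * (W (s + a) - W s)) ->
  (forall s u, 0 < s -> s <= u -> W s <= W u) ->
  (forall t, 0 <= W t <= K2) ->
  (forall k, (K <= k)%N -> `|phi (k.+1%:R * a)| <= e) ->
  cvgn (series (fun j => r ^+ j * psi (j%:R * a))) ->
  a * limn (series (fun j => r ^+ j * psi (j%:R * a))) <=
  a * psi 0 + 2 * e - phi a + (1 - r) * \sum_(0 <= k < K) `|phi (k.+1%:R * a)| + a * K2.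
Proof.
move=> a0 r01 taylor Wmono Wb xe cv.
rewrite mulrC -ler_pdivlMr //; apply: limr_le => //.
near=> n; rewrite ler_pdivlMr // mulrC.
have Kn : (K.+1 <= n)%N by near: n; exact: nbhs_infty_ge.
have n_gt0 : (0 < n)%N := leq_trans (ltn0Sn K) Kn.
rewrite -(prednK n_gt0); apply: (weighted_riemann_sum_le a0 r01 taylor Wmono Wb xe).
by rewrite -ltnS prednK.
Unshelve. all: by end_near. Qed.

End RiemannSums.

Section SmallParameters.
Variable R : realType.

Lemma cvg_at_right_of_diffquot (f : R -> R) (l : R) :
  (fun h : R => (f h - f 0) / h) @ 0^'+ --> l -> f x @[x --> 0^'+] --> f 0.
Proof.
move=> dq.
have : (fun h => h * ((f h - f 0) / h) + f 0) @ 0^'+ --> 0 * l + f 0.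
  apply: cvgD; last exact: cvg_cst.
  by apply: cvgM => //; exact: cvg_at_right_filter.
rewrite mul0r add0r; apply: cvg_trans; apply: near_eq_cvg.
by near=> h; rewrite mulrC divfK ?subrK // gt_eqF.
Unshelve. all: by end_near. Qed.

Lemma exists_small_step (f : R -> R) (C : R) :
  f x @[x --> 0^'+] --> f 0 -> 0 < f 0 -> 0 <= C ->
  exists a, [/\ 0 < a, a <= 1, f 0 / 2 <= f a & a * C <= f 0 / 8].
Proof.
move=> fc f0 C0.
have bnd_gt0 : 0 < f 0 / 8 / (C + 1) by rewrite !divr_gt0 // ltr_pwDr.
near (0 : R)^'+ => a.
have a0 : 0 < a by near: a; exact: nbhs_right_gt.
have a_le : a <= f 0 / 8 / (C + 1) by near: a; exact: nbhs_right_le.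
exists a; split => //.
- by near: a; exact: nbhs_right_le ltr01.
- have : `|f 0 - f a| < f 0 / 2.
    by near: a; move/cvgrPdist_lt: fc; apply; rewrite divr_gt0.
  by rewrite ltr_norml; lra.
- rewrite ler_pdivlMr ?ltr_pwDr // in a_le.
  by apply: le_trans _ a_le; apply: ler_wpM2l; [exact: ltW | rewrite lerDl].
Unshelve. all: by end_near. Qed.

Lemma eventually_small_at_multiples (f : R -> R) (a e : R) :
  f @ +oo --> 0 -> 0 < a -> 0 < e ->
  exists K : nat, forall k, (K <= k)%N -> `|f (k.+1%:R * a)| <= e.
Proof.
move=> f0 a0 e0.
have [M [_ fM]] : \forall u \near +oo, `|0 - f u| < e by move/cvgrPdist_lt: f0; apply.
exists (Num.bound (`|M| / a)) => k Kk.
apply: ltW; rewrite -normrN -[- _]add0r; apply: fM.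
apply: le_lt_trans (ler_norm M) _; rewrite -ltr_pdivrMr //.
apply: lt_le_trans (archi_boundP (divr_ge0 (normr_ge0 M) (ltW a0))) _.
by rewrite ler_nat leqW.
Qed.

Lemma exists_small_rate (eta Y p : R) : 0 < eta -> 0 <= Y -> 0 < p ->
  exists lambda0, 0 < lambda0 /\ forall lambda, 0 < lambda -> lambda < lambda0 ->
    [/\ 0 <= 1 - eta * lambda, 1 - eta * lambda < 1 & eta * lambda * Y <= p / 8].
Proof.
move=> eta0 Y0 p0.
have Yp0 : 0 < 8 * eta * (Y + p) by rewrite !mulr_gt0 // ltr_pwDr.
exists (p / (8 * eta * (Y + p))); split; first by rewrite divr_gt0.
move=> lambda l0; rewrite ltr_pdivlMr // => l1.
by split; [nra | rewrite gtrBl mulr_gt0 | nra].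
Qed.

Lemma add_mul_lt0 (a c F p : R) : 0 < a -> a <= 1 -> 0 < c -> 0 < p ->
  a * F + a / c <= - p -> a + c * F < 0.
Proof.
move=> a0 a1 c0 p0 /(ler_wpM2l (ltW c0)).
rewrite mulrDr [c * (a / c)]mulrC divfK ?gt_eqF // mulrN => caF.
have : 0 < c * p by rewrite mulr_gt0.
nra.
Qed.

End SmallParameters.

Theorem mainTheorem9 (R : realType) (d : nat) (hd : (0 < d)%N)
  (phi dphi ddphi : R -> R)
  (hsmooth : smooth_Rd (fun x : 'rV[R]_d => phi (enorm x)))
  (hdphi : is_deriv_Ici phi dphi)
  (hddphi : is_deriv_Ici dphi ddphi)
  (hphi0 : 0 < phi 0)
  (hlim : phi @ +oo --> (0 : R))
  (hint0 : (@lebesgue_measure R).-integrable `[0, +oo[ (EFin \o phi))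
  (hint1 : (@lebesgue_measure R).-integrable `[0, +oo[ (EFin \o dphi))
  (hint2 : (@lebesgue_measure R).-integrable `[0, +oo[ (EFin \o ddphi))
  (eta_d eta_g : R) (hetad : 0 < eta_d) (hetag : 0 < eta_g) :
  exists lambda0 : R, 0 < lambda0 /\
    forall lambda : R, 0 < lambda -> lambda < lambda0 ->
      let rho := 1 - eta_d * lambda in
      exists v0 : R, 0 < v0 /\
        cvg (series (fun j : nat => rho ^+ j * dphi (j%:R * v0)) @ \oo) /\
        v0 = - (eta_g * eta_d) * limn (series (fun j : nat => rho ^+ j * dphi (j%:R * v0))).
Proof.
case: hdphi => dphiE dphi_right; case: hddphi => ddphiE _.
have ddphi_cont := radial_second_derivative_continuous hd hsmooth dphiE ddphiE.
have [W [K2 [dW Wb]]] := bounded_primitive_norm ddphi_cont hint2.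
have dphi_var := is_derive_dist_le ddphiE dW.
have Wmono (s u : R) : 0 < s -> s <= u -> W s <= W u.
  by move=> s0 su; apply: ger0_is_derive_le s0 su dW _ => t _; exact: normr_ge0.
have K2_ge0 : 0 <= K2 by have /andP[] := Wb 0; exact: le_trans.
set c := eta_g * eta_d; have c0 : 0 < c by rewrite mulr_gt0.
have C0 : 0 <= `|dphi 0| + K2 + c^-1 by rewrite !addr_ge0 // invr_ge0 ltW.
have [a [a0 a1 phi_a aC]] :=
  exists_small_step (cvg_at_right_of_diffquot dphi_right) hphi0 C0.
have [K phiK] := eventually_small_at_multiples hlim a0 (divr_gt0 hphi0 (ltr0n R 16)).
set Y := \sum_(0 <= k < K) `|phi (k.+1%:R * a)|.
have [lambda0 [lambda0_gt0 small_rate]] :=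
  exists_small_rate hetad (sumr_ge0 _ (fun k _ => normr_ge0 _) : 0 <= Y) hphi0.
exists lambda0; split => // lambda l0 l1 rho.
have [r_ge0 r_lt1 rY] := small_rate lambda l0 l1; rewrite -/rho in r_ge0 r_lt1.
set B := `|dphi 0| + `|dphi a| + K2.
have dphiB (s : R) : a <= s -> `|dphi s| <= B.
  move=> /(variation_bounded a0 dphi_var Wb) /le_trans; apply.
  by rewrite /B -addrA lerDr.
have dphi0B : `|dphi 0| <= B by rewrite /B -addrA lerDl addr_ge0.
have cv_a := cvg_weighted_series_mul a0 (lexx a) r_ge0 r_lt1 dphi0B dphiB.
have Fa := weighted_series_le a0 (introT andP (conj r_ge0 (ltW r_lt1)))
  (fun s s0 => taylor1_dist_le dphiE dphi_var s0 a0) Wmono Wb phiK cv_a.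
have dphic (s : R) : a <= s -> {for s, continuous dphi}.
  move=> as_; have [dphi_s _] := ddphiE s (lt_le_trans a0 as_).
  by apply: differentiable_continuous; rewrite -derivable1_diffP.
have Fa_neg : a + c * limn (series (fun j => rho ^+ j * dphi (j%:R * a))) < 0.
  apply: (add_mul_lt0 a0 a1 c0 (divr_gt0 hphi0 (ltr0n R 8))).
  have : a * dphi 0 <= a * `|dphi 0| by rewrite ler_wpM2l ?ler_norm // ltW.
  move: Fa; rewrite -/Y /rho; lra.
have [v [av [cv vE]]] :=
  weighted_series_fixed_point a0 c0 r_ge0 r_lt1 dphic dphi0B dphiB Fa_neg.
by exists v; split; first exact: lt_le_trans a0 av.
Qed.
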